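(* Let $\rho$ be a state of $A$ and $\sigma$ a state of $B$. Let $\mathcal{H}_S\subseteq\mathcal{H}_B$ be a subspace such that (1) $\mathcal{H}_B=\mathcal{H}_S\oplus\mathcal{H}_S^\perp$ with $U_B(g)=U_S(g)\oplus U_{S^\perp}(g)$ for all $g$ (i.e. $\mathcal{H}_S$ is invariant and carries the restricted representation $U_S$), and (2) $\Pi_S\sigma\Pi_S=\sigma$, where $\Pi_S$ is the projector onto $\mathcal{H}_S$. Let $S$ be the system with Hilbert space $\mathcal{H}_S$ and representation $U_S$. Then there exists a $G$-covariant channel from $A$ to $B$ mapping $\rho$ to $\sigma$ if and only if there exists a $G$-covariant channel from $A$ to $S$ mapping $\rho$ to $\sigma$.
   Context: $G$ is a compact group; finite-dimensional systems carry continuous unitary representations. A channel (CPTP map) $\mathcal{E}$ from system $X$ to system $Y$ is $G$-covariant if $\mathcal{E}(U_X(g)MU_X(g)^\dagger)=U_Y(g)\mathcal{E}(M)U_Y(g)^\dagger$ for all $g\in G$ and all operators $M$. *)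

From HB Require Import structures.
From mathcomp Require Import all_boot all_order all_algebra.
From mathcomp Require Import spectral.
From mathcomp Require Import complex mxtens.
From mathcomp Require Import all_classical topology.
From mathcomp Require Import Rstruct Rstruct_topology.

Set Implicit Arguments.
Unset Strict Implicit.
Unset Printing Implicit Defensive.

Import Order.TTheory GRing.Theory Num.Theory.
Local Open Scope ring_scope.

Notation Cplx := (Rdefinitions.R)[i].

Definition compact_group (G : topologicalType)
  (mul : G -> G -> G) (inv : G -> G) (one : G) : Prop :=
  [/\ (forall x y z, mul x (mul y z) = mul (mul x y) z),
      (forall x, mul one x = x /\ mul x one = x),
      (forall x, mul (inv x) x = one /\ mul x (inv x) = one),
      continuous (fun p : G * G => mul p.1 p.2) /\ continuous inv
    & compact [set: G] /\ hausdorff_space G].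

Definition adjmx m n (M : 'M[Cplx]_(m, n)) : 'M[Cplx]_(n, m) := (map_mx Num.conj M)^T.

Definition psdmx n (M : 'M[Cplx]_n) : Prop :=
  forall v : 'cV[Cplx]_n, 0 <= (adjmx v *m M *m v) 0 0.

Definition is_state n (rho : 'M[Cplx]_n) : Prop := psdmx rho /\ \tr rho = 1.

Definition unitary_rep (G : topologicalType) (mul : G -> G -> G) (one : G)
  n (U : G -> 'M[Cplx]_n) : Prop :=
  [/\ (forall g, U g \is unitarymx),
      (forall g h, U (mul g h) = U g *m U h),
      U one = 1%:M
    & (forall i j, continuous (fun g => complex.Re (U g i j)) /\
                   continuous (fun g => complex.Im (U g i j)))].

Definition mxblk k m (X : 'M[Cplx]_(k * m)) (i j : 'I_k) : 'M[Cplx]_m :=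
  \matrix_(a, b) X (mxtens_index (i, a)) (mxtens_index (j, b)).

(* the ampliation id_k (x) E *)
Definition ampl k m n (E : 'M[Cplx]_m -> 'M[Cplx]_n) (X : 'M[Cplx]_(k * m))
  : 'M[Cplx]_(k * n) :=
  \sum_(i < k) \sum_(j < k) (delta_mx i j : 'M[Cplx]_k) *t E (mxblk X i j).

Definition is_linear_map m n (E : 'M[Cplx]_m -> 'M[Cplx]_n) : Prop :=
  forall (a : Cplx) (M N : 'M[Cplx]_m), E (a *: M + N) = a *: E M + E N.

Definition completely_positive m n (E : 'M[Cplx]_m -> 'M[Cplx]_n) : Prop :=
  forall k (X : 'M[Cplx]_(k * m)), psdmx X -> psdmx (ampl E X).

Definition trace_preserving m n (E : 'M[Cplx]_m -> 'M[Cplx]_n) : Prop :=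
  forall M, \tr (E M) = \tr M.

Definition is_channel m n (E : 'M[Cplx]_m -> 'M[Cplx]_n) : Prop :=
  [/\ is_linear_map E, completely_positive E & trace_preserving E].

Definition covariant (G : Type) m n (UX : G -> 'M[Cplx]_m) (UY : G -> 'M[Cplx]_n)
  (E : 'M[Cplx]_m -> 'M[Cplx]_n) : Prop :=
  forall g M, E (UX g *m M *m adjmx (UX g)) = UY g *m E M *m adjmx (UY g).

Definition cov_convertible (G : Type) m n (UX : G -> 'M[Cplx]_m)
  (UY : G -> 'M[Cplx]_n) (rho : 'M[Cplx]_m) (sigma : 'M[Cplx]_n) : Prop :=
  exists E : 'M[Cplx]_m -> 'M[Cplx]_n,
    [/\ is_channel E, covariant UX UY E & E rho = sigma].

From HB Require Import structures.
From mathcomp Require Import all_boot all_order all_algebra.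
From mathcomp Require Import spectral.
From mathcomp Require Import complex mxtens.
From mathcomp Require Import all_classical topology.
From mathcomp Require Import Rstruct Rstruct_topology.
Set Implicit Arguments.
Unset Strict Implicit.
Unset Printing Implicit Defensive.

Import Order.TTheory GRing.Theory Num.Theory.
Local Open Scope ring_scope.

(* Write V for the isometry onto H_S and Q := 1 - V V^* for the projector onto
   its orthogonal complement.  A covariant channel F : A -> S gives the
   covariant channel M |-> V F(M) V^* : A -> B, since V intertwines U_S and U_B.
   Conversely, compose a covariant channel E : A -> B with the compression
   M |-> V^* M V + tr(Q M Q) 1/d_S, which keeps the part of the output inside
   H_S and replaces the weight on the complement by the maximally mixed state
   of S.  It is completely positive (its second term has Kraus operators
   e_s e_b^T Q), trace preserving, covariant because Q commutes with U_B and
   the maximally mixed state is invariant, and it maps sigma to V^* sigma V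
   because Q sigma = 0. *)

Lemma adjmxM m n p (A : 'M[Cplx]_(m, n)) (B : 'M[Cplx]_(n, p)) :
  adjmx (A *m B) = adjmx B *m adjmx A.
Proof. by rewrite /adjmx map_mxM trmx_mul. Qed.

Lemma adjmxK m n (A : 'M[Cplx]_(m, n)) : adjmx (adjmx A) = A.
Proof. by apply/matrixP=> i j; rewrite /adjmx !mxE conjCK. Qed.

Lemma adjmxB m n (A B : 'M[Cplx]_(m, n)) : adjmx (A - B) = adjmx A - adjmx B.
Proof. by apply/matrixP=> i j; rewrite /adjmx !mxE rmorphB. Qed.

Lemma adjmx1 n : adjmx (1%:M : 'M[Cplx]_n) = 1%:M.
Proof. by apply/matrixP=> i j; rewrite /adjmx !mxE rmorphMn rmorph1 eq_sym. Qed.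

Lemma adjmx_delta m n (i : 'I_m) (j : 'I_n) : adjmx (delta_mx i j) = delta_mx j i.
Proof. by apply/matrixP=> a b; rewrite /adjmx !mxE rmorph_nat andbC. Qed.

Lemma adjmx_tens m n p q (A : 'M[Cplx]_(m, n)) (B : 'M[Cplx]_(p, q)) :
  adjmx (A *t B) = adjmx A *t adjmx B.
Proof. by rewrite /adjmx map_mxT trmx_tens. Qed.

Lemma unitarymx_adjP n (U : 'M[Cplx]_n) :
  U \is unitarymx -> U *m adjmx U = 1%:M /\ adjmx U *m U = 1%:M.
Proof.
move=> /unitarymxP U_unitary.
have UU : U *m adjmx U = 1%:M.
  by rewrite -U_unitary; congr (_ *m _); apply/matrixP => i j; rewrite !mxE.
by split => //; apply: mulmx1C.
Qed.

Lemma mxtrace_conj_isometry m n (W : 'M[Cplx]_(m, n)) (M : 'M[Cplx]_n) :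
  adjmx W *m W = 1%:M -> \tr (W *m M *m adjmx W) = \tr M.
Proof. by move=> WW; rewrite mxtrace_mulC mulmxA WW mul1mx. Qed.

Section Intertwiner.

Variables (m n : nat) (U : 'M[Cplx]_m) (W : 'M[Cplx]_n) (V : 'M[Cplx]_(m, n)).
Hypotheses (U_unitary : U \is unitarymx) (W_unitary : W \is unitarymx).
Hypothesis UV : U *m V = V *m W.

Lemma intertwiner_adj : adjmx U *m V = V *m adjmx W.
Proof.
have [WW _] := unitarymx_adjP W_unitary; have [_ UU] := unitarymx_adjP U_unitary.
by rewrite -[LHS]mulmx1 -WW mulmxA -(mulmxA _ V) -UV mulmxA UU mul1mx.
Qed.

Lemma adjmx_intertwiner : adjmx V *m U = W *m adjmx V.
Proof. by rewrite -[W]adjmxK -adjmxM -intertwiner_adj adjmxM adjmxK. Qed.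

End Intertwiner.

Lemma psdmx_conj m n (W : 'M[Cplx]_(n, m)) (M : 'M[Cplx]_m) :
  psdmx M -> psdmx (W *m M *m adjmx W).
Proof.
by move=> M_psd v; have := M_psd (adjmx W *m v); rewrite adjmxM adjmxK !mulmxA.
Qed.

Lemma psdmx_add n (A B : 'M[Cplx]_n) : psdmx A -> psdmx B -> psdmx (A + B).
Proof. by move=> A_psd B_psd v; rewrite mulmxDr mulmxDl mxE addr_ge0. Qed.

Lemma psdmx_scale n (c : Cplx) (A : 'M[Cplx]_n) : 0 <= c -> psdmx A -> psdmx (c *: A).
Proof. by move=> c_ge0 A_psd v; rewrite -scalemxAr -scalemxAl mxE mulr_ge0. Qed.

Lemma psdmx_sum n (I : finType) (F : I -> 'M[Cplx]_n) :
  (forall i, psdmx (F i)) -> psdmx (\sum_i F i).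
Proof.
move=> F_psd; elim/big_ind: _ => //; last exact: psdmx_add.
by move=> v; rewrite mulmx0 mul0mx mxE.
Qed.

Lemma tensmxDr m n p q (A : 'M[Cplx]_(m, n)) (B C : 'M[Cplx]_(p, q)) :
  A *t (B + C) = A *t B + A *t C.
Proof. by apply/matrixP=> i j; rewrite !mxE mulrDr. Qed.

Lemma tensmxZr m n p q (A : 'M[Cplx]_(m, n)) (c : Cplx) (B : 'M[Cplx]_(p, q)) :
  A *t (c *: B) = c *: (A *t B).
Proof. by apply/matrixP=> i j; rewrite !mxE mulrCA. Qed.

Lemma tensmx_sumr m n p q (A : 'M[Cplx]_(m, n)) (I : finType)
    (F : I -> 'M[Cplx]_(p, q)) :
  A *t (\sum_i F i) = \sum_i A *t F i.
Proof. by apply: (big_morph (tensmx A)); [apply: tensmxDr | apply: tensmx0]. Qed.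

Section Ampliation.

Variables (k m n : nat).
Implicit Types (E F : 'M[Cplx]_m -> 'M[Cplx]_n) (X : 'M[Cplx]_(k * m)).

Lemma eq_ampl E F X : E =1 F -> ampl E X = ampl F X.
Proof. by move=> EF; apply: eq_bigr => i _; apply: eq_bigr => j _; rewrite EF. Qed.

Lemma ampl_conj p F (W : 'M[Cplx]_(p, n)) X :
  ampl (fun M => W *m F M *m adjmx W) X =
  (1%:M *t W) *m ampl F X *m adjmx (1%:M *t W).
Proof.
rewrite adjmx_tens adjmx1 /ampl mulmx_sumr mulmx_suml; apply: eq_bigr => i _.
rewrite mulmx_sumr mulmx_suml; apply: eq_bigr => j _.
by rewrite !tensmx_mul mul1mx mulmx1.
Qed.

Lemma ampl_add E F X : ampl (fun M => E M + F M) X = ampl E X + ampl F X.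
Proof.
rewrite /ampl -big_split; apply: eq_bigr => i _.
by rewrite -big_split; apply: eq_bigr => j _; apply: tensmxDr.
Qed.

Lemma ampl_scale (c : Cplx) E X : ampl (fun M => c *: E M) X = c *: ampl E X.
Proof.
rewrite /ampl scaler_sumr; apply: eq_bigr => i _.
by rewrite scaler_sumr; apply: eq_bigr => j _; apply: tensmxZr.
Qed.

Lemma ampl_sum (I : finType) (E : I -> 'M[Cplx]_m -> 'M[Cplx]_n) X :
  ampl (fun M => \sum_l E l M) X = \sum_l ampl (E l) X.
Proof.
rewrite /ampl [RHS]exchange_big; apply: eq_bigr => i _ /=.
by rewrite [RHS]exchange_big; apply: eq_bigr => j _; apply: tensmx_sumr.
Qed.

End Ampliation.

Section CompletelyPositive.

Variables (m n : nat).
Implicit Types (E F : 'M[Cplx]_m -> 'M[Cplx]_n).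

Lemma eq_cp E F : E =1 F -> completely_positive F -> completely_positive E.
Proof. by move=> EF F_cp k X X_psd; rewrite (eq_ampl _ EF); apply: F_cp. Qed.

Lemma cp_conj p F (W : 'M[Cplx]_(p, n)) :
  completely_positive F -> completely_positive (fun M => W *m F M *m adjmx W).
Proof. by move=> F_cp k X X_psd; rewrite ampl_conj; apply/psdmx_conj/F_cp. Qed.

Lemma cp_add E F :
  completely_positive E -> completely_positive F ->
  completely_positive (fun M => E M + F M).
Proof.
move=> E_cp F_cp k X X_psd; rewrite ampl_add.
by apply: psdmx_add; [apply: E_cp | apply: F_cp].
Qed.

Lemma cp_scale (c : Cplx) E :
  0 <= c -> completely_positive E -> completely_positive (fun M => c *: E M).
Proof. by move=> c_ge0 E_cp k X X_psd; rewrite ampl_scale; apply/psdmx_scale/E_cp. Qed.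

Lemma cp_sum (I : finType) (E : I -> 'M[Cplx]_m -> 'M[Cplx]_n) :
  (forall l, completely_positive (E l)) ->
  completely_positive (fun M => \sum_l E l M).
Proof.
by move=> E_cp k X X_psd; rewrite ampl_sum; apply: psdmx_sum => l; apply: E_cp.
Qed.

End CompletelyPositive.

Lemma delta_mx_conj p n (A : 'M[Cplx]_n) (s : 'I_p) (b : 'I_n) :
  delta_mx s b *m A *m delta_mx b s = A b b *: delta_mx s s.
Proof.
apply/matrixP=> i j; rewrite !mxE (bigD1 b) //= big1 => [|l lb]; last first.
  by rewrite !mxE (negPf lb) /= mulr0.
rewrite addr0 !mxE eqxx /= (bigD1 b) //= big1 => [|l lb]; last first.
  by rewrite !mxE (negPf lb) andbF mul0r.
rewrite addr0 !mxE eqxx andbT.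
by case: (i == s); case: (j == s); rewrite /= ?mul0r ?mulr0 ?mul1r ?mulr1.
Qed.

Lemma trace_conj_scalar_kraus p n (Q Y : 'M[Cplx]_n) :
  \tr (Q *m Y *m adjmx Q) *: (1%:M : 'M_p) =
  \sum_(s : 'I_p) \sum_(b : 'I_n) (delta_mx s b *m Q) *m Y *m adjmx (delta_mx s b *m Q).
Proof.
rewrite (mx1_sum_delta _ p) scaler_sumr; apply: eq_bigr => s _.
rewrite /mxtrace scaler_suml; apply: eq_bigr => b _.
by rewrite adjmxM adjmx_delta !mulmxA -(mulmxA _ Q) -(mulmxA _ (Q *m Y)) delta_mx_conj.
Qed.

Lemma cp_trace_conj_scalar m n p (F : 'M[Cplx]_m -> 'M[Cplx]_n) (Q : 'M[Cplx]_n) :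
  completely_positive F ->
  completely_positive (fun M => \tr (Q *m F M *m adjmx Q) *: (1%:M : 'M_p)).
Proof.
move=> F_cp; apply: (eq_cp (fun M => trace_conj_scalar_kraus p Q (F M))).
by apply: cp_sum => s; apply: cp_sum => b; apply: cp_conj.
Qed.

Lemma dim_gt0_of_supported n p (V : 'M[Cplx]_(p, n)) (sigma : 'M[Cplx]_p) :
  \tr sigma = 1 -> V *m adjmx V *m sigma *m (V *m adjmx V) = sigma -> (0 < n)%N.
Proof.
case: n V => // V tr_sigma sigma_supp; move: tr_sigma.
by rewrite -sigma_supp thinmx0 !mul0mx mxtrace0 => /eqP; rewrite eq_sym oner_eq0.
Qed.

Section Isometry.

Variables (n p : nat) (V : 'M[Cplx]_(p, n)).
Hypothesis V_isometry : adjmx V *m V = 1%:M.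

Definition coproj : 'M[Cplx]_p := 1%:M - V *m adjmx V.

Lemma adjmx_coproj : adjmx coproj = coproj.
Proof. by rewrite /coproj adjmxB adjmx1 adjmxM adjmxK. Qed.

Lemma coproj_mulV : coproj *m V = 0.
Proof. by rewrite /coproj mulmxBl mul1mx -mulmxA V_isometry mulmx1 subrr. Qed.

Lemma coproj_idem : coproj *m coproj = coproj.
Proof. by rewrite {2}/coproj mulmxBr mulmx1 mulmxA coproj_mulV mul0mx subr0. Qed.

Lemma coproj_supported (sigma : 'M[Cplx]_p) :
  V *m adjmx V *m sigma *m (V *m adjmx V) = sigma -> coproj *m sigma = 0.
Proof. by move=> <-; rewrite !mulmxA coproj_mulV !mul0mx. Qed.

Lemma coproj_intertwiner (U : 'M[Cplx]_p) (W : 'M[Cplx]_n) :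
  U \is unitarymx -> W \is unitarymx -> U *m V = V *m W ->
  coproj *m U = U *m coproj.
Proof.
move=> U_unitary W_unitary UV.
rewrite /coproj mulmxBl mulmxBr mul1mx mulmx1 -mulmxA.
by rewrite (adjmx_intertwiner U_unitary W_unitary UV) mulmxA -UV mulmxA.
Qed.

Definition compress (M : 'M[Cplx]_p) : 'M[Cplx]_n :=
  adjmx V *m M *m V + (n%:R^-1 * \tr (coproj *m M *m coproj)) *: 1%:M.

Lemma compress_supported (sigma : 'M[Cplx]_p) :
  V *m adjmx V *m sigma *m (V *m adjmx V) = sigma ->
  compress sigma = adjmx V *m sigma *m V.
Proof.
move=> /coproj_supported Qsigma.
by rewrite /compress Qsigma mul0mx mxtrace0 mulr0 scale0r addr0.
Qed.

Lemma compressD (a : Cplx) (M N : 'M[Cplx]_p) :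
  compress (a *: M + N) = a *: compress M + compress N.
Proof.
rewrite /compress mulmxDr mulmxDl -scalemxAr -scalemxAl.
rewrite (mulmxDr coproj) (mulmxDl _ _ coproj) -(scalemxAr a coproj) -scalemxAl.
by rewrite mxtraceD mxtraceZ mulrDr scalerDl scalerDr scalerA mulrCA addrACA.
Qed.

Lemma mxtrace_compress (M : 'M[Cplx]_p) : (0 < n)%N -> \tr (compress M) = \tr M.
Proof.
move=> n_gt0; rewrite mxtraceD mxtraceZ mxtrace1 mulrAC mulVf ?pnatr_eq0 -?lt0n // mul1r.
rewrite [\tr (coproj *m _ *m _)]mxtrace_mulC mulmxA coproj_idem.
rewrite (mxtrace_mulC (adjmx V *m M)) mulmxA -mxtraceD -mulmxDl.
by rewrite /coproj addrC subrK mul1mx.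
Qed.

Lemma is_channel_embed m (F : 'M[Cplx]_m -> 'M[Cplx]_n) :
  is_channel F -> is_channel (fun M => V *m F M *m adjmx V).
Proof.
move=> [F_lin F_cp F_tp]; split; last 2 first.
- exact: cp_conj.
- by move=> M; rewrite mxtrace_conj_isometry ?adjmxK.
by move=> a M N; rewrite F_lin mulmxDr mulmxDl -scalemxAr -scalemxAl.
Qed.

Lemma is_channel_compress m (E : 'M[Cplx]_m -> 'M[Cplx]_p) :
  (0 < n)%N -> is_channel E -> is_channel (compress \o E).
Proof.
move=> n_gt0 [E_lin E_cp E_tp]; split; last 2 first.
- apply: (eq_cp (F := fun M => adjmx V *m E M *m adjmx (adjmx V) +
      n%:R^-1 *: (\tr (coproj *m E M *m adjmx coproj) *: 1%:M))).
    by move=> M; rewrite /= /compress adjmxK adjmx_coproj scalerA.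
  apply: cp_add; first exact: cp_conj.
  by apply: cp_scale; [rewrite invr_ge0 ler0n | apply: cp_trace_conj_scalar].
- by move=> M; rewrite /= mxtrace_compress.
by move=> a M N; rewrite /= E_lin compressD.
Qed.

Lemma covariant_embed (G : Type) m (UX : G -> 'M[Cplx]_m) (UY : G -> 'M[Cplx]_p)
    (US : G -> 'M[Cplx]_n) (F : 'M[Cplx]_m -> 'M[Cplx]_n) :
  (forall g, UY g *m V = V *m US g) ->
  covariant UX US F -> covariant UX UY (fun M => V *m F M *m adjmx V).
Proof.
move=> UV F_cov g M; rewrite F_cov !mulmxA -UV -!mulmxA -adjmxM.
by rewrite -UV adjmxM.
Qed.

Lemma covariant_compress (G : Type) m (UX : G -> 'M[Cplx]_m) (UY : G -> 'M[Cplx]_p)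
    (US : G -> 'M[Cplx]_n) (E : 'M[Cplx]_m -> 'M[Cplx]_p) :
  (forall g, UY g \is unitarymx) -> (forall g, US g \is unitarymx) ->
  (forall g, UY g *m V = V *m US g) ->
  covariant UX UY E -> covariant UX US (compress \o E).
Proof.
move=> UY_unitary US_unitary UV E_cov g M; rewrite /= E_cov.
have VadjU := adjmx_intertwiner (UY_unitary g) (US_unitary g) (UV g).
have adjUV := intertwiner_adj (UY_unitary g) (US_unitary g) (UV g).
have QU := coproj_intertwiner (UY_unitary g) (US_unitary g) (UV g).
have [US_adj _] := unitarymx_adjP (US_unitary g).
have [_ UY_adj] := unitarymx_adjP (UY_unitary g).
have adjUQ : adjmx (UY g) *m coproj = coproj *m adjmx (UY g).
  by rewrite -adjmx_coproj -!adjmxM QU.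
have tr_inv : \tr (coproj *m (UY g *m E M *m adjmx (UY g)) *m coproj) =
              \tr (coproj *m E M *m coproj).
  rewrite !mulmxA QU -(mulmxA _ (adjmx (UY g))) adjUQ !mulmxA mxtrace_mulC.
  by rewrite !mulmxA UY_adj mul1mx.
rewrite /compress tr_inv mulmxDr mulmxDl -scalemxAr -scalemxAl mulmx1 US_adj.
by rewrite !mulmxA VadjU -!mulmxA adjUV.
Qed.

End Isometry.

Theorem lemma6 (G : topologicalType) (mul : G -> G -> G) (inv : G -> G) (one : G)
  (dA dB dS : nat)
  (UA : G -> 'M[Cplx]_dA) (UB : G -> 'M[Cplx]_dB) (US : G -> 'M[Cplx]_dS)
  (V : 'M[Cplx]_(dB, dS))
  (rho : 'M[Cplx]_dA) (sigma : 'M[Cplx]_dB) :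
  compact_group mul inv one ->
  unitary_rep mul one UA -> unitary_rep mul one UB -> unitary_rep mul one US ->
  adjmx V *m V = 1%:M ->
  (forall g, UB g *m V = V *m US g) ->
  is_state rho -> is_state sigma ->
  (V *m adjmx V) *m sigma *m (V *m adjmx V) = sigma ->
  (cov_convertible UA UB rho sigma <->
   cov_convertible UA US rho (adjmx V *m sigma *m V)).
Proof.
move=> _ _ [UB_unitary _ _ _] [US_unitary _ _ _] V_isometry UV _ [_ tr_sigma] sigma_supp.
split=> [[E [E_channel E_cov E_rho]] | [F [F_channel F_cov F_rho]]].
- exists (compress V \o E); split.
  + apply: is_channel_compress => //.
    exact: dim_gt0_of_supported tr_sigma sigma_supp.
  + exact: covariant_compress.
  + by rewrite /= E_rho compress_supported.
- exists (fun M => V *m F M *m adjmx V); split.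
  + exact: is_channel_embed.
  + exact: covariant_embed F_cov.
  + by rewrite F_rho -[RHS]sigma_supp !mulmxA.
Qed.
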